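(* Let $k=2^{\ell}$ with $\ell\ge2$ an integer and $q=4k$. Let $f\in\mathbb F_q[X,Y]$ be a local permutation polynomial whose permutation polynomial tuple consists of the $q$ elements of the group $G_1=\{b^ja^i:0\le j\le 2k-1,\ 0\le i\le 1\}$ (in some order), where $a$ and $b$ are as defined below. Then $f$ has a companion.
   Context: The elements of $\mathbb F_q$ are enumerated as $\mathbb F_q=\{c_0,\dots,c_{q-1}\}$; $\mathfrak S_q$ is the symmetric group of permutations of $\mathbb F_q$, composed right to left, $(\sigma\tau)(x)=\sigma(\tau(x))$, written in cycle notation. $a=(c_0,c_1)(c_2,c_3)\cdots(c_{4k-2},c_{4k-1})$ and $b=C_1C_2$, where $C_1$ is the $2k$-cycle whose entries in order are: for $m=0,1,\dots,\frac{k-2}{2}$ the pair $c_{2m},c_{2(2m+k-1)}$; then for $n=0,1,\dots,\frac{k-4}{2}$ the pair $c_{2n+k},c_{2(2n+k)}$; then $c_{4k-1},c_{4k-4}$; and $C_2$ is the $2k$-cycle whose entries in order are: for $m=0,1,\dots,\frac{k-2}{2}$ the pair $c_{2m+1},c_{2(2m+k)+1}$; then for $n=0,1,\dots,\frac{k-4}{2}$ the pair $c_{2n+k+1},c_{2(2n+k)-1}$; then $c_{4k-2},c_{4k-5}$. ($G_1$ is a subgroup of $\mathfrak S_q$ of order $q$ whose non-identity elements have no fixed points.) Every function $\mathbb F_q^2\to\mathbb F_q$ is identified with the unique polynomial in $\mathbb F_q[X,Y]$ of degree $<q$ in each variable representing it. $f$ is a local permutation polynomial (LPP) if $x\mapsto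 f(x,y_0)$ and $y\mapsto f(x_0,y)$ are permutations of $\mathbb F_q$ for all $x_0,y_0$. A permutation polynomial tuple is $(\beta_0,\dots,\beta_{q-1})\in\mathfrak S_q^q$ such that $\beta_i^{-1}\beta_j$ has no fixed point whenever $i\ne j$; LPPs $f$ correspond bijectively to such tuples via $f(x,\beta_i(x))=c_i$ for all $x$ and all $i$. Two LPPs $f,g$ are orthogonal (companions) if for every $(u,v)\in\mathbb F_q^2$ the system $f(X,Y)=u$, $g(X,Y)=v$ has exactly one solution in $\mathbb F_q^2$; a companion of $f$ is an LPP orthogonal to $f$. *)

From mathcomp Require Import all_boot all_order all_algebra all_field.
Set Implicit Arguments. Unset Strict Implicit. Unset Printing Implicit Defensive.

(* Index-level description (indices i stand for c_i, 0 <= i < 4k). *)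

Definition a_idx (i : nat) : nat := if odd i then i.-1 else i.+1.

Definition C1_idx (k : nat) : seq nat :=
  flatten [seq [:: 2 * m; 2 * (2 * m + k - 1)] | m <- iota 0 (k %/ 2)]
  ++ flatten [seq [:: 2 * n + k; 2 * (2 * n + k)] | n <- iota 0 (k %/ 2 - 1)]
  ++ [:: 4 * k - 1; 4 * k - 4].

Definition C2_idx (k : nat) : seq nat :=
  flatten [seq [:: 2 * m + 1; 2 * (2 * m + k) + 1] | m <- iota 0 (k %/ 2)]
  ++ flatten [seq [:: 2 * n + k + 1; 2 * (2 * n + k) - 1] | n <- iota 0 (k %/ 2 - 1)]
  ++ [:: 4 * k - 2; 4 * k - 5].

(* a cycle given by its list of entries: x |-> successor of x in the cycle
   (x itself if x does not occur); this is path.next *)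
Definition b_idx (k : nat) (i : nat) : nat := next (C1_idx k) (next (C2_idx k) i).

(* Transport to the field via the enumeration cs = [:: c_0; ...; c_{q-1}]. *)
Definition a_perm (F : finFieldType) (cs : seq F) : {ffun F -> F} :=
  [ffun x => nth x cs (a_idx (index x cs))].

Definition b_perm (F : finFieldType) (k : nat) (cs : seq F) : {ffun F -> F} :=
  [ffun x => nth x cs (b_idx k (index x cs))].

(* G_1 = { b^j a^i : 0 <= j <= 2k-1, 0 <= i <= 1 }, composition right to left *)
Definition G1 (F : finFieldType) (k : nat) (cs : seq F) : {set {ffun F -> F}} :=
  [set [ffun x => iter (nat_of_ord ji.1) (b_perm k cs) (iter (nat_of_ord ji.2) (a_perm cs) x)]
    | ji : 'I_(2 * k) * 'I_2].

(* local permutation polynomial (functions F^2 -> F identified with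
   reduced polynomials) *)
Definition LPP (F : finFieldType) (f : F -> F -> F) : Prop :=
  (forall y, bijective (fun x => f x y)) /\ (forall x, bijective (f x)).

Definition orthogonal_LPP (F : finFieldType) (f g : F -> F -> F) : Prop :=
  forall u v : F, exists! p : F * F, f p.1 p.2 = u /\ g p.1 p.2 = v.

From HB Require Import structures.
From mathcomp Require Import all_boot all_order all_algebra all_field all_fingroup.
From mathcomp Require Import zify.
Set Implicit Arguments. Unset Strict Implicit. Unset Printing Implicit Defensive.
Import GRing.Theory.

(* Reading the cycles C1 and C2 of b as two rows indexed by Z_(2k), b shifts along
   the rows and a swaps the rows, moving the odd positions by k.  Hence G_1 acts
   regularly on F_q and is isomorphic to Z_(2k) x| Z_2, the generator of Z_2 acting by
   multiplication by 1 + k.  In these coordinates every level set of f is the graph of a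
   left multiplication, so an orthomorphism mu of the group (mu and w |-> mu w * w^-1
   both bijective) gives the companion g(X, Y) = mu (Y X^-1) X.  The map
   (x, e) |-> (floor(x / 2) + e k, e + x mod 2) is such an orthomorphism. *)

Definition orthomorphism (gT : finGroupType) (mu : gT -> gT) : Prop :=
  injective mu /\ injective (fun w => mu w * w^-1)%g.

Section Companion.
Local Open Scope group_scope.

Lemma LPP_companion_of_orthomorphism (F : finFieldType) (gT : finGroupType)
    (Phi : gT -> F) (f : F -> F -> F) (mu : gT -> gT) :
  bijective Phi -> LPP f -> orthomorphism mu ->
  (forall u, exists w, forall X, f (Phi X) (Phi (w * X)) = u) ->
  exists g, LPP g /\ orthogonal_LPP f g.
Proof.
move=> [coord PhiK coordK] [_ f_x_bij] [mu_inj quot_inj] f_level.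
have Phi_inj := can_inj PhiK.
pose g x y := Phi (mu (coord y * (coord x)^-1) * coord x).
have gE X Y : g (Phi X) (Phi Y) = Phi (mu (Y * X^-1) * X) by rewrite /g !PhiK.
have gE_quot Y X : mu (Y * X^-1) * X = (mu (Y * X^-1) * (Y * X^-1)^-1) * Y.
  by rewrite invMg invgK mulgA mulgKV.
exists g; split; first split.
- move=> y; apply: injF_bij => x1 x2.
  rewrite -(coordK x1) -(coordK x2) -(coordK y) !gE !gE_quot => /Phi_inj /mulIg /quot_inj.
  by move/mulgI/invg_inj => ->.
- move=> x; apply: injF_bij => y1 y2.
  by rewrite -(coordK x) -(coordK y1) -(coordK y2) !gE => /Phi_inj /mulIg /mu_inj /mulIg ->.
move=> u v; have [w fw] := f_level u.
have level_u x y : f x y = u -> y = Phi (w * coord x).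
  by move=> fxy; apply: (bij_inj (f_x_bij x)); rewrite fxy -{1}(coordK x) fw.
exists (Phi ((mu w)^-1 * coord v), Phi (w * ((mu w)^-1 * coord v))); split => /=.
  by rewrite fw gE mulgK mulKVg coordK.
move=> [x y] /= [fxy gxy]; rewrite (level_u _ _ fxy) in gxy *.
move: gxy; rewrite -{1}(coordK x) gE mulgK => <-.
by rewrite PhiK mulKg coordK.
Qed.

Lemma iter_left_mul (gT : finGroupType) (T : Type) (phi : gT -> T) (f : T -> T) (w : gT) :
  (forall X, f (phi X) = phi (w * X)) -> forall j X, iter j f (phi X) = phi (w ^+ j * X).
Proof. by move=> fw; elim=> [|j IH] X; rewrite ?mul1g // iterS IH fw expgS mulgA. Qed.

End Companion.

Lemma nth_flatten_pairs (f g : nat -> nat) d a r i : i < 2 * r ->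
  nth d (flatten [seq [:: f j; g j] | j <- iota a r]) i =
  if odd i then g (a + i %/ 2) else f (a + i %/ 2).
Proof.
elim: r a i => [|r IH] a [|[|i]] //= ir; rewrite ?addn0 // IH; last by lia.
by rewrite negbK (_ : i.+2 %/ 2 = (i %/ 2).+1) ?addSnnS //; lia.
Qed.

Lemma size_flatten_pairs (f g : nat -> nat) a r :
  size (flatten [seq [:: f j; g j] | j <- iota a r]) = 2 * r.
Proof. by elim: r a => [|r IH] a //=; rewrite IH mulnS. Qed.

Lemma next_nth_uniq (T : eqType) (s : seq T) d i : uniq s -> i < size s ->
  next s (nth d s i) = nth d s (i.+1 %% size s).
Proof.
case: s => [|y s'] // s_uniq ilt; rewrite next_nth mem_nth // index_uniq //.
case: (ltnP i.+1 (size s').+1) => [ilt'|]; first by rewrite /= modn_small //= (set_nth_default d).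
by move: ilt => /= ilt ige; rewrite (_ : i = size s'); [rewrite /= modnn /= nth_default | lia].
Qed.

Section CycleEntries.
Variable k : nat.
Hypothesis k_even : ~~ odd k.
Hypothesis k_ge4 : 4 <= k.

Definition C1_entry p :=
  if p == 2 * k - 2 then 4 * k - 1 else if p == 2 * k - 1 then 4 * k - 4 else
  if ~~ odd p then p else if p < k then 2 * p + 2 * k - 4 else 2 * p - 2.

Definition C2_entry p :=
  if p == 2 * k - 2 then 4 * k - 2 else if p == 2 * k - 1 then 4 * k - 5 else
  if ~~ odd p then p.+1 else if p < k then 2 * p + 2 * k - 1 else 2 * p - 3.

Definition twist_pos p := if ~~ odd p then p else if p < k then p + k else p - k.

Ltac split_innermost_ifs :=
  repeat match goal with |- context [if ?b then _ else _] =>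
    lazymatch b with context [if _ then _ else _] => fail | _ => case: (boolP b) => ? end
  end.

Ltac split_entries := rewrite /C1_entry /C2_entry /twist_pos; split_innermost_ifs.

Definition cycle_entry (e : bool) p := if e then C2_entry p else C1_entry p.

Lemma cycle_entry_lt e p : p < 2 * k -> cycle_entry e p < 4 * k.
Proof. by rewrite /cycle_entry; case: e; split_entries; lia. Qed.

Lemma cycle_entry_inj e e' p p' : p < 2 * k -> p' < 2 * k ->
  cycle_entry e p = cycle_entry e' p' -> p = p' /\ e = e'.
Proof. by rewrite /cycle_entry; case: e; case: e'; split_entries; lia. Qed.

Lemma a_idx_cycle_entry e p : p < 2 * k ->
  a_idx (cycle_entry e p) = cycle_entry (~~ e) (twist_pos p).
Proof. by rewrite /a_idx /cycle_entry; case: e; split_entries; lia. Qed.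

Lemma pairs_cat_mkseq (f1 g1 f2 g2 h : nat -> nat) (x y : nat) :
  (forall i, i < k -> h i = if odd i then g1 (i %/ 2) else f1 (i %/ 2)) ->
  (forall i, k <= i < 2 * k - 2 -> h i = if odd i then g2 ((i - k) %/ 2) else f2 ((i - k) %/ 2)) ->
  h (2 * k - 2) = x -> h (2 * k - 1) = y ->
  flatten [seq [:: f1 j; g1 j] | j <- iota 0 (k %/ 2)]
    ++ flatten [seq [:: f2 j; g2 j] | j <- iota 0 (k %/ 2 - 1)]
    ++ [:: x; y] = mkseq h (2 * k).
Proof.
move=> h_lo h_hi <- <-; have k2 : 2 * (k %/ 2) = k by lia.
apply: (@eq_from_nth _ 0) => [|i]; rewrite !size_cat !size_flatten_pairs k2 /=.
  by rewrite size_mkseq; lia.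
move=> ilt; rewrite nth_mkseq; last by lia.
rewrite nth_cat size_flatten_pairs k2; case: ltnP => i1.
  by rewrite nth_flatten_pairs ?h_lo //; lia.
rewrite nth_cat size_flatten_pairs; case: ltnP => i2.
  rewrite nth_flatten_pairs ?add0n; last by lia.
  have -> : odd (i - k) = odd i by lia.
  by rewrite h_hi //; lia.
have [-> | ->] : i = 2 * k - 2 \/ i = 2 * k - 1 by lia.
  by rewrite (_ : 2 * k - 2 - k - _ = 0) //; lia.
by rewrite (_ : 2 * k - 1 - k - _ = 1) //; lia.
Qed.

Definition cycle_idx (e : bool) := if e then C2_idx k else C1_idx k.

Lemma cycle_idxE e : cycle_idx e = mkseq (cycle_entry e) (2 * k).
Proof.
by case: e; apply: pairs_cat_mkseq => [i|i||];
  rewrite /= /C1_entry /C2_entry; split_innermost_ifs; lia.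
Qed.

Lemma cycle_entry_notin e p : p < 2 * k -> cycle_entry e p \notin cycle_idx (~~ e).
Proof.
move=> plt; rewrite cycle_idxE; apply/mapP => -[q]; rewrite mem_iota => /andP[_ qlt].
by case/cycle_entry_inj => //; case: e.
Qed.

Lemma b_idx_cycle_entry e p : p < 2 * k ->
  b_idx k (cycle_entry e p) = cycle_entry e (p.+1 %% (2 * k)).
Proof.
move=> plt; have p1lt : p.+1 %% (2 * k) < 2 * k by rewrite ltn_mod; lia.
have next_cycle : next (cycle_idx e) (cycle_entry e p) = cycle_entry e (p.+1 %% (2 * k)).
  rewrite cycle_idxE -(nth_mkseq 0 (cycle_entry e) plt) next_nth_uniq.
  - by rewrite size_mkseq nth_mkseq.
  - by apply/mkseq_uniqP => i j ilt jlt /cycle_entry_inj[].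
  - by rewrite size_mkseq.
have next_notin s x : x \notin s -> next s x = x by move=> xs; rewrite next_nth (negbTE xs).
rewrite /b_idx -/(cycle_idx true) -/(cycle_idx false).
case: e next_cycle (@cycle_entry_notin e) => next_cycle notin.
  by rewrite next_cycle next_notin ?notin.
by rewrite [next (cycle_idx true) _]next_notin ?notin.
Qed.

End CycleEntries.

Section ModularGroup.
Variable m : nat.
Local Notation k := m.+1.*2.
Local Notation n := (2 * k)%N.
Local Open Scope ring_scope.

Lemma modulus_gt1 : (1 < n)%N. Proof. lia. Qed.

Lemma natZp_inj (a b : nat) : (a < n)%N -> (b < n)%N -> a%:R = b%:R :> 'Z_n -> a = b.
Proof.
move=> an bn /(congr1 (@nat_of_ord _)); rewrite !val_Zp_nat ?modulus_gt1 // !modn_small //.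
Qed.

Definition twist : 'Z_n := k.+1%:R.

Lemma twist_sqr : twist * twist = 1.
Proof.
rewrite -natrM (_ : (k.+1 * k.+1 = n * m.+2 + 1)%N); last by lia.
by rewrite natrD natrM pchar_Zp ?modulus_gt1 // mul0r add0r.
Qed.

Lemma twistX j : twist ^+ j = twist ^+ odd j.
Proof.
have twist_double i : twist ^+ i.*2 = 1.
  by elim: i => // i IH; rewrite (doubleS i) !exprS mulrA twist_sqr mul1r.
by rewrite -[in LHS](odd_double_half j) exprD twist_double mulr1.
Qed.

Lemma twistXb (e f : bool) : twist ^+ (e (+) f) = twist ^+ e * twist ^+ f.
Proof. by rewrite -exprD [RHS]twistX oddD !oddb. Qed.

(* For k a power of 2 this is the modular group of order 4k. *)
Definition modular_group := ('Z_n * bool)%type.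
HB.instance Definition _ := Finite.copy modular_group ('Z_n * bool)%type.

Definition mg_mul (x y : modular_group) : modular_group :=
  (x.1 + twist ^+ x.2 * y.1, x.2 (+) y.2).
Definition mg_inv (x : modular_group) : modular_group := (- (twist ^+ x.2 * x.1), x.2).
Definition mg_one : modular_group := (0, false).

Lemma mg_mulA : associative mg_mul.
Proof. by move=> x y z; rewrite /mg_mul /= addbA twistXb mulrDr addrA mulrA. Qed.

Lemma mg_mul1 : left_id mg_one mg_mul.
Proof. by move=> x; rewrite /mg_mul /= expr0 mul1r add0r; case: x. Qed.

Lemma mg_mulV : left_inverse mg_one mg_inv mg_mul.
Proof. by move=> x; rewrite /mg_mul /= addNr addbb. Qed.

HB.instance Definition _ := Finite_isGroup.Build modular_group mg_mulA mg_mul1 mg_mulV.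

Lemma mg_mulE (x y : 'Z_n) (e f : bool) :
  (((x, e) : modular_group) * (y, f))%g = (x + twist ^+ e * y, e (+) f) :> modular_group.
Proof. by []. Qed.

Lemma mg_invE (x : 'Z_n) (e : bool) :
  (((x, e) : modular_group)^-1)%g = (- (twist ^+ e * x), e) :> modular_group.
Proof. by []. Qed.

Definition mg_twist : modular_group := (0, true).
Definition mg_shift : modular_group := (1, false).

Lemma mg_twist_mul (x : 'Z_n) (e : bool) : (mg_twist * (x, e))%g = (twist * x, ~~ e).
Proof. by rewrite mg_mulE add0r. Qed.

Lemma mg_shift_mul (x : 'Z_n) (e : bool) : (mg_shift * (x, e))%g = (1 + x, e).
Proof. by rewrite mg_mulE mul1r. Qed.

Lemma Zp_ltn (x : 'Z_n) : (x < n)%N.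
Proof. by have := ltn_ord x; rewrite [X in (_ < X)%N -> _]Zp_cast // modulus_gt1. Qed.

Lemma twist_mul_natr (x : nat) : twist * x%:R = (x + odd x * k)%:R.
Proof.
rewrite -natrM (_ : (k.+1 * x = x + odd x * k + n * x./2)%N); last first.
  by rewrite -{1 2}(odd_double_half x); case: (odd x) => /=; nia.
by rewrite natrD natrM pchar_Zp ?modulus_gt1 // mul0r addr0.
Qed.

Lemma val_twist_mul (x : 'Z_n) : nat_of_ord (twist * x) = twist_pos k x.
Proof.
rewrite -[x in twist * x]natr_Zp twist_mul_natr val_Zp_nat ?modulus_gt1 // /twist_pos.
have := Zp_ltn x; case: (odd x) => /= xlt; last by rewrite addn0 modn_small.
case: ltnP => [xk | kx]; first by rewrite mul1n modn_small //; lia.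
by rewrite mul1n (_ : x + k = x - k + n)%N ?modnDr ?modn_small //; lia.
Qed.

Lemma val_add1 (x : 'Z_n) : nat_of_ord (1 + x) = (x.+1 %% n)%N.
Proof. by rewrite -[x in 1 + x]natr_Zp nat1r val_Zp_nat ?modulus_gt1. Qed.

Definition mg_orth (w : modular_group) : modular_group :=
  ((w.1 %/ 2 + w.2 * k)%N%:R, w.2 (+) odd w.1).

Lemma mg_orth_inj : injective mg_orth.
Proof.
move=> [x e] [y f] [E1 E2]; have xn := Zp_ltn x; have yn := Zp_ltn y.
have {}E1 : (x %/ 2 + e * k = y %/ 2 + f * k)%N by apply: natZp_inj => //; lia.
have [hxy ef] : (x %/ 2 = y %/ 2)%N /\ e = f by case: e f E1 {E2} => -[]; lia.
subst f; move/addbI: E2 => oxy; congr pair; apply: val_inj => /=; lia.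
Qed.

Lemma mg_orth_quot_fst (w : modular_group) :
  (mg_orth w * w^-1)%g.1 = ((w.2 (+) odd w.1) * k)%N%:R - (w.1 %/ 2 + odd w.1)%N%:R.
Proof.
case: w => x e; rewrite mg_invE /= mulrN mulrA -twistXb addbAC addbb /=.
have -> : twist ^+ odd x * x = (x + odd x * k)%N%:R.
  have := twist_mul_natr x; rewrite natr_Zp.
  by case: (odd x) => [|_]; rewrite ?mul1r ?addn0 ?natr_Zp.
set h := (x %/ 2)%N; set x0 := odd x.
have E : (h + e * k + (h + x0))%N%:R = ((e (+) x0) * k + (x + x0 * k))%N%:R :> 'Z_n.
  rewrite (_ : (_ + (x + _) = h + e * k + (h + x0) + n * (x0 && ~~ e))%N).
    by rewrite [RHS]natrD natrM pchar_Zp ?modulus_gt1 // mul0r addr0.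
  by rewrite /h /x0; case: e; case: (odd x) (odd_double_half x); lia.
apply: (addIr (h + x0)%N%:R); apply: (addIr (x + x0 * k)%N%:R).
by rewrite subrK addrAC subrK -!natrD E.
Qed.

Lemma mg_orth_quot_inj : injective (fun w => mg_orth w * w^-1)%g.
Proof.
move=> [x e] [y f] E; have xn := Zp_ltn x; have yn := Zp_ltn y.
have Eo : odd x = odd y.
  by move/(congr1 snd): E; rewrite /= !(addbC _ (odd _)) !addbK.
have := congr1 fst E; rewrite !mg_orth_quot_fst /= -Eo.
set c := e (+) odd x; set c' := f (+) odd x => E1.
have {}E1 : (c * k + (y %/ 2 + odd x))%N%:R = (c' * k + (x %/ 2 + odd x))%N%:R :> 'Z_n.
  by rewrite natrD [RHS]natrD -[X in X + _ = _](subrK (x %/ 2 + odd x)%N%:R) E1 addrAC subrK.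
move: E1; rewrite !addnA (natrD _ _ (odd x)) [RHS]natrD => /addIr /natZp_inj E1.
have {}E1 : (c * k + y %/ 2 = c' * k + x %/ 2)%N by apply: E1; lia.
have [/addIb ef hxy] : c = c' /\ (x %/ 2 = y %/ 2)%N.
  by move: E1; rewrite /c /c'; case: (_ (+) _) (_ (+) _) => -[]; lia.
by congr pair; first apply: val_inj => /=; lia.
Qed.

Lemma mg_orthomorphism : orthomorphism mg_orth.
Proof. by split; [exact: mg_orth_inj | exact: mg_orth_quot_inj]. Qed.

End ModularGroup.

Section Encoding.
Variables (F : finFieldType) (m : nat) (cs : seq F).
Local Notation k := m.+2.*2.
Hypotheses (F_card : #|F| = 4 * k) (cs_uniq : uniq cs) (cs_size : size cs = 4 * k).

Let k_even : ~~ odd k. Proof. by rewrite odd_double. Qed.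
Let k_ge4 : 4 <= k. Proof. lia. Qed.
Let Zp_ltk (x : 'Z_(2 * k)) : x < 2 * k. Proof. exact: Zp_ltn. Qed.

Definition point (w : modular_group m.+1) : F := nth 0%R cs (cycle_entry k w.2 w.1).

Lemma point_pair x e : point (x, e) = nth 0%R cs (cycle_entry k e x).
Proof. by []. Qed.

Lemma point_bij : bijective point.
Proof.
have point_inj : injective point.
  move=> [x e] [y f] /eqP; rewrite /point nth_uniq ?cs_size ?cycle_entry_lt //=.
  by case/eqP/cycle_entry_inj => // xy ->; congr pair; apply: val_inj.
by apply: inj_card_bij point_inj _; rewrite card_prod card_bool card_ord Zp_cast // F_card; lia.
Qed.

Lemma nth_cs_default (x : F) z : z < 4 * k -> nth x cs z = nth 0%R cs z.
Proof. by move=> zlt; apply: set_nth_default; rewrite cs_size. Qed.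

Lemma a_perm_point w : a_perm cs (point w) = point (mg_twist m.+1 * w)%g.
Proof.
case: w => x e; have := Zp_ltk (twist m.+1 * x)%R; rewrite val_twist_mul => tx_lt.
rewrite mg_twist_mul !point_pair /a_perm ffunE index_uniq ?cs_size ?cycle_entry_lt //.
by rewrite a_idx_cycle_entry // val_twist_mul nth_cs_default ?cycle_entry_lt.
Qed.

Lemma b_perm_point w : b_perm k cs (point w) = point (mg_shift m.+1 * w)%g.
Proof.
case: w => x e; have := Zp_ltk (1 + x)%R; rewrite val_add1 => x1_lt.
rewrite mg_shift_mul !point_pair /b_perm ffunE index_uniq ?cs_size ?cycle_entry_lt //.
by rewrite b_idx_cycle_entry // val_add1 nth_cs_default ?cycle_entry_lt.
Qed.

Lemma G1_point h : h \in G1 k cs -> exists w, forall X, h (point X) = point (w * X)%g.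
Proof.
case/imsetP => -[j i] _ ->; exists (mg_shift m.+1 ^+ j * mg_twist m.+1 ^+ i)%g => X.
by rewrite ffunE (iter_left_mul a_perm_point) (iter_left_mul b_perm_point) mulgA.
Qed.

Lemma G1_level_sets (f : F -> F -> F) (beta : 'I_(4 * k) -> {ffun F -> F}) :
    [set beta i | i : 'I_(4 * k)] = G1 k cs ->
    (forall (i : 'I_(4 * k)) (x : F), f x (beta i x) = nth x cs i) ->
  forall u, exists w, forall X, f (point X) (point (w * X)%g) = u.
Proof.
move=> beta_G1 f_beta u.
have cs_enum : cs =i enum F.
  have cs_sub : {subset cs <= enum F} by move=> v _; rewrite mem_enum.
  have enum_size : size (enum F) <= size cs by rewrite -cardE F_card cs_size.
  exact: (uniq_min_size cs_uniq cs_sub enum_size).2.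
have u_lt : index u cs < 4 * k by rewrite -cs_size index_mem cs_enum mem_enum.
have [w beta_w] : exists w, forall X, beta (Ordinal u_lt) (point X) = point (w * X)%g.
  by apply: G1_point; rewrite -beta_G1 imset_f.
by exists w => X; rewrite -beta_w f_beta nth_index // cs_enum mem_enum.
Qed.

End Encoding.

Theorem theorem4p8 (l : nat) (hl : 2 <= l) (F : finFieldType)
  (hF : #|F| = 4 * 2 ^ l)
  (cs : seq F) (hcs_uniq : uniq cs) (hcs_size : size cs = 4 * 2 ^ l)
  (f : F -> F -> F) (hf : LPP f)
  (beta : 'I_(4 * 2 ^ l) -> {ffun F -> F})
  (hbeta_inj : injective beta)
  (hbeta_G1 : [set beta i | i : 'I_(4 * 2 ^ l)] = G1 (2 ^ l) cs)
  (hfbeta : forall (i : 'I_(4 * 2 ^ l)) (x : F), f x (beta i x) = nth x cs i) :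
  exists g : F -> F -> F, LPP g /\ orthogonal_LPP f g.
Proof.
have [m k_eq] : exists m, 2 ^ l = m.+2.*2.
  have two_pow : 2 ^ l = 2 * 2 ^ l.-1 by rewrite -expnS prednK // ltnW.
  have : 2 ^ 1 <= 2 ^ l.-1 by rewrite leq_exp2l //; lia.
  by exists (2 ^ l.-1 - 2); rewrite two_pow; lia.
move: hF hcs_size beta hbeta_G1 hfbeta {hbeta_inj}; rewrite k_eq.
move=> hF hcs_size beta hbeta_G1 hfbeta.
have point_bij := point_bij hF hcs_uniq hcs_size.
apply: (LPP_companion_of_orthomorphism point_bij hf (mg_orthomorphism m.+1)).
exact: G1_level_sets hbeta_G1 hfbeta.
Qed.
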